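(* The degree histogram problem (on incremental graph streams, with error measured in $\ell_\infty$) admits an extendable bitwise AND gadget with $v(d)=O(d)$ and $t(d)=O(d^2)$.
   Context: The degree histogram of an $n$-vertex graph is $(d_1,\dots,d_{n-1})$ where $d_i$ is the number of vertices of degree $i$; the range carries the $\ell_\infty$ norm. Let $\zeta\in\mathbb N$ be a fixed constant and $m=\zeta d$. An extendable bitwise AND gadget for a graph function $g$ consists of positive increasing functions $v,t:\mathbb N\to\mathbb N$ and, for each $d$: an initial graph $H_{\mathrm{init}}=(V,E_0)$ with $|V|=v(d)$; edges $e_1,\dots,e_d\in\binom V2$, defining $H^1_x=H_{\mathrm{init}}\cup\{e_i: x_i=1\}$ for $x\in\{0,1\}^d$; and for every sequence of queries $q^1,\dots,q^m\in\{0,1\}^d$, edge sets $S^1,T^1,\dots,S^m,T^m$ and functions $\mathrm{dec}_j:\mathrm{Range}(g)\to\mathbb R$ (depending on the queries but not on $x$) such that: (a) each $\mathrm{dec}_j$ is $1$-Lipschitz with respect to the norm on $\mathrm{Range}(g)$; (b) with $Q^j_x=H^j_x\cup S^j$, $\mathrm{dec}_j(g(Q^j_x))-\mathrm{dec}_j(g(H^j_x))=\langle x,q^j\rangle$ for all $x$; (c) $H^{j+1}_x=Q^j_x\cup T^j$; and the total number of edge insertions $|E_0|+d+\sum_j(|S^j|+|T^j|)$ is at most $t(d)$. *)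

From HB Require Import structures.
From mathcomp Require Import all_boot all_order all_algebra.
From mathcomp Require Import Rstruct.
Set Implicit Arguments. Unset Strict Implicit. Unset Printing Implicit Defensive.
Import Order.TTheory GRing.Theory Num.Theory.
Local Open Scope ring_scope.

Notation R := Rdefinitions.R.

Definition is_edge (n : nat) (e : {set 'I_n}) : bool := #|e| == 2%N.
Definition edgeset (n : nat) (E : {set {set 'I_n}}) : Prop :=
  forall e, e \in E -> is_edge e.

Definition deg (n : nat) (E : {set {set 'I_n}}) (u : 'I_n) : nat :=
  #|[set e in E | u \in e]|.

(* Degree histogram (d_1, ..., d_{n-1}); entry i : 'I_(n.-1) is d_{i+1},
   the number of vertices of degree i+1. *)
Definition hist (n : nat) (E : {set {set 'I_n}}) : 'I_n.-1 -> R :=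
  fun i => (#|[set u : 'I_n | deg E u == i.+1]|)%:R.

Definition linf_dist (k : nat) (a b : 'I_k -> R) : R :=
  \big[Num.max/0]_(i < k) `|a i - b i|.

Definition lipschitz1 (k : nat) (f : ('I_k -> R) -> R) : Prop :=
  forall a b : 'I_k -> R, `|f a - f b| <= linf_dist a b.

Definition H1 (n d : nat) (E0 : {set {set 'I_n}}) (e : 'I_d -> {set 'I_n})
  (x : 'I_d -> bool) : {set {set 'I_n}} :=
  E0 :|: [set e i | i in [set i : 'I_d | x i]].

(* H^{j}_x for the 0-indexed query j : by (c), H^{j+1}_x = H^j_x ∪ S^j ∪ T^j,
   hence H^j_x = H^1_x ∪ ⋃_{k<j} (S^k ∪ T^k). *)
Definition Hj (n d m : nat) (E0 : {set {set 'I_n}}) (e : 'I_d -> {set 'I_n})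
  (S T : 'I_m -> {set {set 'I_n}}) (j : 'I_m) (x : 'I_d -> bool)
  : {set {set 'I_n}} :=
  H1 E0 e x :|: \bigcup_(k : 'I_m | (k < j)%N) (S k :|: T k).

Definition Qj (n d m : nat) (E0 : {set {set 'I_n}}) (e : 'I_d -> {set 'I_n})
  (S T : 'I_m -> {set {set 'I_n}}) (j : 'I_m) (x : 'I_d -> bool)
  : {set {set 'I_n}} :=
  Hj E0 e S T j x :|: S j.

Definition ip (d : nat) (x q : 'I_d -> bool) : nat :=
  (\sum_(i < d) ((x i && q i) : nat))%N.

Definition ext_AND_gadget_hist (zeta : nat) (v t : nat -> nat) : Prop :=
  (forall d, (0 < v d)%N) /\ (forall d, (0 < t d)%N) /\
  {homo v : a b / (a < b)%N} /\ {homo t : a b / (a < b)%N} /\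
  forall d : nat,
  exists (E0 : {set {set 'I_(v d)}}) (e : 'I_d -> {set 'I_(v d)}),
    edgeset E0 /\ (forall i, is_edge (e i)) /\
    forall q : 'I_(zeta * d) -> ('I_d -> bool),
    exists (S T : 'I_(zeta * d) -> {set {set 'I_(v d)}})
           (dec : 'I_(zeta * d) -> ('I_(v d).-1 -> R) -> R),
      (forall j, edgeset (S j) /\ edgeset (T j)) /\
      (forall j, lipschitz1 (dec j)) /\
      (forall j (x : 'I_d -> bool),
          dec j (hist (Qj E0 e S T j x)) - dec j (hist (Hj E0 e S T j x))
          = (ip x (q j))%:R) /\
      (#|E0| + d + \sum_(j < zeta * d) (#|S j| + #|T j|) <= t d)%N.

From mathcomp Require Import all_boot all_order all_algebra.
From mathcomp Require Import Rstruct zify.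
Set Implicit Arguments. Unset Strict Implicit. Unset Printing Implicit Defensive.
Import Order.TTheory GRing.Theory Num.Theory.

(* The gadget is a union of stars.  Centres a_0, ..., a_(d-1) receive the
   edges; every other vertex is adjacent to centres only, so its degree is at
   most d.  The initial graph gives each centre d padding edges, e_i adds one
   more, and query j adds a fresh vertex joined to a_i when q^j_i = 1 (in S^j)
   and to all remaining centres afterwards (in T^j).  Thus a_i has degree
   d + x_i + j in H^j_x and d + x_i + j + q^j_i in Q^j_x, so the number of
   vertices of degree d + j + 2 is 0 in H^j_x and <x, q^j> in Q^j_x: reading
   that one histogram entry is the 1-Lipschitz decoder. *)

Lemma card_ord_interval n lo hi : (hi <= n)%N ->
  #|[set w : 'I_n | (lo <= w < hi)%N]| = (hi - lo)%N.
Proof.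
move=> hn; rewrite -sum1_card.
rewrite -[RHS]muln1 -sum_nat_const_nat (big_nat_widen _ _ _ _ _ hn) big_geq_mkord.
by apply: eq_bigl => i; rewrite inE andbC.
Qed.

Lemma is_edge2 n (u w : 'I_n) : is_edge [set u; w] = (u != w).
Proof. by rewrite /is_edge cards2; case: (u != w). Qed.

Lemma ord_neq_ltn n (u w : 'I_n) : (u < w)%N -> u != w.
Proof. by move=> uw; apply/eqP => /(f_equal val) /=; lia. Qed.

Section StarUnion.
Variables (n d : nat) (d_le_n : (d <= n)%N).
Let center (i : 'I_d) : 'I_n := widen_ord d_le_n i.
Variables (lo hi : 'I_d -> nat) (E : {set {set 'I_n}}).
Hypothesis d_le_lo : forall i, (d <= lo i)%N.
Hypothesis hi_le_n : forall i, (hi i <= n)%N.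
Hypothesis memE : forall e, e \in E <->
  exists i (w : 'I_n), (lo i <= w < hi i)%N /\ e = [set center i; w].

Lemma deg_star_center i : deg E (center i) = (hi i - lo i)%N.
Proof.
rewrite /deg.
have center_lt w j : (lo j <= w)%N -> (center i < w)%N.
  by have := ltn_ord i; have := d_le_lo j; rewrite /=; lia.
have -> : [set e in E | center i \in e] =
          [set [set center i; w] | w in [set w : 'I_n | (lo i <= w < hi i)%N]].
  apply/setP => e; rewrite inE; apply/andP/imsetP.
  - case=> /memE [j [w [/andP[lo_w w_hi] ->]]].
    rewrite in_set2 => /orP[/eqP/(f_equal val) /= ij|/eqP/(f_equal val) /= iw].
      have eq_ij : i = j by apply: val_inj.
      by subst j; exists w; rewrite // inE lo_w.
    by have := center_lt w j lo_w; rewrite /= iw ltnn.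
  - case=> w; rewrite inE => w_in ->; split; last by rewrite set21.
    by apply/memE; exists i, w.
rewrite card_in_imset ?card_ord_interval // => w w'; rewrite !inE.
move=> /andP[/(center_lt w i) iw _] /andP[/(center_lt w' i) iw' _] eq_ww'.
have : w \in [set center i; w'] by rewrite -eq_ww' set22.
by rewrite in_set2 => /orP[/eqP wi|/eqP //]; move: iw; rewrite wi ltnn.
Qed.

Lemma deg_star_leaf (w : 'I_n) : (d <= w)%N -> (deg E w <= d)%N.
Proof.
move=> d_le_w; rewrite /deg.
apply: (@leq_trans #|[set [set center i; w] | i : 'I_d]|); last first.
  by rewrite (leq_trans (leq_imset_card _ _)) ?card_ord.
apply/subset_leq_card/subsetP => e; rewrite inE => /andP[/memE].
case=> i [w' [_ ->]]; rewrite in_set2 => /orP[/eqP/(f_equal val) /= wi|/eqP <-].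
  by have := ltn_ord i; lia.
exact: imset_f.
Qed.

End StarUnion.

Section HistogramGadget.
Variables (zeta d : nat).
Local Notation m := (zeta * d).

(* Vertex layout: centres 0..d-1, the bit vertex d, padding vertices
   d+1..2d, and the vertex 2d+1+j of query j. *)
Definition gadget_size : nat := (2 * d + m).+1.

Lemma d_le_gadget_size : (d <= gadget_size)%N.
Proof. rewrite /gadget_size; lia. Qed.

Definition center (i : 'I_d) : 'I_gadget_size := widen_ord d_le_gadget_size i.

Lemma center_inj : injective center.
Proof. by move=> a b /(f_equal val) /= /val_inj. Qed.

Definition vertex (k : nat) : 'I_gadget_size := inord k.

Lemma vertexK k : (k <= 2 * d + m)%N -> val (vertex k) = k.
Proof. exact: inordK. Qed.

Definition query_vertex (j : 'I_m) : 'I_gadget_size := vertex (2 * d + 1 + j).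

Lemma query_vertexE (j : 'I_m) : val (query_vertex j) = (2 * d + 1 + j)%N.
Proof. by rewrite vertexK //; have := ltn_ord j; lia. Qed.

Lemma is_edge_center i (w : 'I_gadget_size) : (d <= w)%N -> is_edge [set center i; w].
Proof. by move=> d_le_w; rewrite is_edge2 ord_neq_ltn //= (leq_trans (ltn_ord i)). Qed.

Definition padding : {set {set 'I_gadget_size}} :=
  [set [set center p.1; p.2] |
     p in [set p : 'I_d * 'I_gadget_size | (d < p.2 <= 2 * d)%N]].

Definition bit_edge (i : 'I_d) : {set 'I_gadget_size} := [set center i; vertex d].

Definition query_edges (P : {pred 'I_d}) (j : 'I_m) : {set {set 'I_gadget_size}} :=
  [set [set center i; query_vertex j] | i in P].

Variable q : 'I_m -> 'I_d -> bool.

Local Notation S j := (query_edges (q j) j).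
Local Notation T j := (query_edges predT j).
Local Notation H j x := (Hj padding bit_edge (fun k => S k) (fun k => T k) j x).
Local Notation Q j x := (Qj padding bit_edge (fun k => S k) (fun k => T k) j x).

Definition first_leaf (x : 'I_d -> bool) (i : 'I_d) : nat := (d + ~~ x i)%N.

Lemma first_leaf_ge x i : (d <= first_leaf x i)%N.
Proof. exact: leq_addr. Qed.

Lemma mem_Hj (x : 'I_d -> bool) (j : 'I_m) e : e \in H j x <->
  exists i (w : 'I_gadget_size),
    (first_leaf x i <= w < 2 * d + 1 + j)%N /\ e = [set center i; w].
Proof.
have j_lt := ltn_ord j; rewrite /first_leaf; split.
- rewrite /Hj /H1 !in_setU => /orP[/orP[|]|].
  + case/imsetP=> -[i w]; rewrite inE /= => w_in ->.
    by exists i, w; split=> //; case: (x i); lia.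
  + case/imsetP=> i; rewrite inE => xi ->; exists i, (vertex d).
    by rewrite vertexK ?xi; [split=> //; lia | lia].
  + case/bigcupP=> k k_lt_j; rewrite in_setU => /orP[]/imsetP[i _ ->];
    exists i, (query_vertex k); rewrite query_vertexE;
    by split=> //; case: (x i); lia.
- case=> i [w [w_in ->]]; have w_lt := ltn_ord w; rewrite /Hj /H1 !in_setU.
  case: (ltnP w d.+1) => w_bit.
    have xi : x i by move: w_in; case: (x i) => //=; lia.
    have -> : w = vertex d.
      by apply: val_inj; rewrite vertexK; [move: w_in; rewrite xi /=; lia | lia].
    by rewrite (imset_f bit_edge (_ : i \in [set i | x i])) ?orbT // inE.
  case: (ltnP w (2 * d + 1)) => w_pad.
    by rewrite (imset_f (fun p => [set center p.1; p.2]) (x := (i, w))) // inE /=; lia.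
  have k_lt : (w - (2 * d + 1) < m)%N by lia.
  pose k := Ordinal k_lt.
  have w_k : w = query_vertex k by apply: val_inj; rewrite query_vertexE /=; lia.
  apply/orP; right; apply/bigcupP; exists k; first by rewrite /=; lia.
  by rewrite w_k in_setU; apply/orP; right; apply/imsetP; exists i.
Qed.

Lemma mem_Qj (x : 'I_d -> bool) (j : 'I_m) e : e \in Q j x <->
  exists i (w : 'I_gadget_size),
    (first_leaf x i <= w < 2 * d + 1 + j + q j i)%N /\ e = [set center i; w].
Proof.
have j_lt := ltn_ord j; rewrite /Qj in_setU; split.
- case/orP=> [/mem_Hj [i [w [w_in ->]]]|/imsetP[i qi ->]].
    by exists i, w; split=> //; lia.
  exists i, (query_vertex j); rewrite query_vertexE.
  by split=> //; move: qi; rewrite unfold_in /first_leaf => ->; case: (x i); lia.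
- case=> i [w [w_in ->]].
  case: (ltnP w (2 * d + 1 + j)) => w_lt.
    by apply/orP; left; apply/mem_Hj; exists i, w; split=> //; lia.
  have qi : q j i by move: w_in; case: (q j i) => //=; lia.
  have -> : w = query_vertex j.
    by apply: val_inj; rewrite query_vertexE; move: w_in; rewrite qi /=; lia.
  by apply/orP; right; apply/imsetP; exists i.
Qed.

Lemma deg_Hj_le x (j : 'I_m) (u : 'I_gadget_size) : (deg (H j x) u <= d + j + 1)%N.
Proof.
have j_lt := ltn_ord j.
have hi_le (i : 'I_d) : (2 * d + 1 + j <= gadget_size)%N by rewrite /gadget_size; lia.
have star := mem_Hj x j.
case: (ltnP u d) => [u_lt|u_ge]; last first.
  by rewrite (leq_trans (deg_star_leaf star u_ge)) //; lia.
have -> : u = center (Ordinal u_lt) by apply: val_inj.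
rewrite (deg_star_center (first_leaf_ge x) hi_le star).
by have := first_leaf_ge x (Ordinal u_lt); lia.
Qed.

Lemma deg_Qj_top x (j : 'I_m) :
  [set u : 'I_gadget_size | deg (Q j x) u == (d + j + 1).+1] =
  center @: [set i | x i && q j i].
Proof.
have j_lt := ltn_ord j.
have hi_le (i : 'I_d) : (2 * d + 1 + j + q j i <= gadget_size)%N.
  by rewrite /gadget_size; case: (q j i); lia.
have star := mem_Qj x j.
apply/setP => u; rewrite inE.
case: (ltnP u d) => [u_lt|u_ge].
  have -> : u = center (Ordinal u_lt) by apply: val_inj.
  rewrite (deg_star_center (first_leaf_ge x) hi_le star) /first_leaf.
  rewrite (mem_imset _ _ center_inj) inE.
  by case: (x _); case: (q j _); apply/idP/idP => /=; lia.
have /negbTE -> : u \notin center @: [set i | x i && q j i].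
  by apply/imsetP => -[i _ /(f_equal val) /= ui]; have := ltn_ord i; lia.
by apply/negbTE/eqP; have := deg_star_leaf star u_ge; lia.
Qed.

(* The fallback value 0 is never used: d + j + 1 is a valid histogram index. *)
Definition decoder (j : 'I_m) (h : 'I_gadget_size.-1 -> R) : R :=
  oapp h 0%R (insub (d + j + 1) : option 'I_gadget_size.-1).

Lemma decoder_lipschitz j : lipschitz1 (decoder j).
Proof.
move=> a b; rewrite /decoder /linf_dist; case: insub => [k|] /=.
  exact: (le_bigmax _ (fun i => `|a i - b i|)%R k).
by rewrite subrr normr0 bigmax_ge_id.
Qed.

Lemma card_and_ip (x y : 'I_d -> bool) : #|[set i | x i && y i]| = ip x y.
Proof.
rewrite -sum1_card /ip big_mkcond /=; apply: eq_bigr => i _.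
by rewrite inE; case: (x i && y i).
Qed.

Lemma decoder_jump x (j : 'I_m) :
  (decoder j (hist (Q j x)) - decoder j (hist (H j x)) = (ip x (q j))%:R)%R.
Proof.
have j_lt := ltn_ord j.
have d_gt0 : (0 < d)%N by move: j_lt; nia.
have idx_lt : (d + j + 1 < gadget_size.-1)%N by rewrite /gadget_size /=; lia.
rewrite /decoder insubT /= /hist deg_Qj_top.
rewrite (card_imset _ center_inj) card_and_ip.
have -> : [set u : 'I_gadget_size | deg (H j x) u == (d + j + 1).+1] = set0.
  apply/setP => u; rewrite !inE.
  by apply/negbTE; rewrite neq_ltn ltnS deg_Hj_le.
by rewrite cards0 subr0.
Qed.

Lemma card_padding : (#|padding| <= d * gadget_size)%N.
Proof.
apply: leq_trans (leq_imset_card _ _) _.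
by apply: leq_trans (max_card _) _; rewrite card_prod !card_ord.
Qed.

Lemma card_query_edges P j : (#|query_edges P j| <= d)%N.
Proof.
apply: leq_trans (leq_imset_card _ _) _.
by apply: leq_trans (max_card _) _; rewrite card_ord.
Qed.

Definition gadget_cost : nat := ((3 * zeta + 3) * d ^ 2 + 2 * d + 1)%N.

Lemma gadget_insertions_le :
  (#|padding| + d + \sum_(j < m) (#|S j| + #|T j|) <= gadget_cost)%N.
Proof.
have queries_le : (\sum_(j < m) (#|S j| + #|T j|) <= \sum_(j < m) 2 * d)%N.
  by apply: leq_sum => j _; rewrite mul2n -addnn leq_add ?card_query_edges.
rewrite sum_nat_const card_ord in queries_le.
have := card_padding; move: queries_le; rewrite /gadget_cost /gadget_size; nia.
Qed.

End HistogramGadget.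

Lemma histogram_ext_AND_gadget zeta :
  ext_AND_gadget_hist zeta (gadget_size zeta) (gadget_cost zeta).
Proof.
split; first by [].
split; first by move=> d; rewrite /gadget_cost addn1.
split; first by move=> a b ab; rewrite /gadget_size ltnS; nia.
split.
  move=> a b ab; rewrite /gadget_cost ltn_add2r -addnS leq_add //.
    by rewrite leq_mul2l leq_sqr ltnW ?orbT.
  by rewrite ltn_pmul2l.
move=> d; exists (padding zeta d), (@bit_edge zeta d); split; [|split].
- move=> e /imsetP[p]; rewrite inE => /andP[d_lt _] ->.
  exact: is_edge_center (ltnW d_lt).
- by move=> i; apply: is_edge_center; rewrite vertexK //; lia.
move=> q; exists (fun j => query_edges (q j) j), (query_edges predT), (@decoder zeta d).
split; first by move=> j; split=> e /imsetP[i _ ->];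
  rewrite is_edge_center // query_vertexE; lia.
split; first exact: decoder_lipschitz.
split; first by move=> j x; exact: decoder_jump.
exact: gadget_insertions_le.
Qed.

Theorem mainTheorem5 :
  forall zeta : nat,
  exists v t : nat -> nat,
    ext_AND_gadget_hist zeta v t /\
    (exists C N : nat, forall d : nat, (N <= d)%N -> (v d <= C * d)%N) /\
    (exists C N : nat, forall d : nat, (N <= d)%N -> (t d <= C * d ^ 2)%N).
Proof.
move=> zeta; exists (gadget_size zeta), (gadget_cost zeta).
split; first exact: histogram_ext_AND_gadget.
split.
- by exists (zeta + 3), 1%N => d d_ge1; rewrite /gadget_size; nia.
- exists (3 * zeta + 6), 1%N => d d_ge1.
  have : (d <= d ^ 2)%N by rewrite -mulnn leq_pmull.
  rewrite /gadget_cost; nia.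
Qed.
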